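(* Let $n\ge2$ and $D>0$. There exist $t_1,C>0$ such that for all $t\in(0,t_1)$, $$t\int_{\mathbb R}\big|\bar s^{(n)}_t(x)-\tfrac{d}{dx}\log p^{(n)}_t(x)\big|^2p^{(n)}_t(x)\,dx\le C\exp\!\big(-\Delta^2/(9t)\big).$$
   Context: $y_k=2(k-1)\Delta-D$ ($k\in[n]$), $\Delta=D/(n-1)$, $z_k=y_k+\Delta$ ($k\in[n-1]$). $p_{\mathcal N}(x;\sigma)=(\sqrt{2\pi}\sigma)^{-1}e^{-x^2/(2\sigma^2)}$, $p^{(n)}_t(x)=\frac1n\sum_kp_{\mathcal N}(x-y_k;\sqrt t)$. Piecewise-linear ESF: $\bar s^{(n)}_t(x)=(y_1-x)/t$ if $x\le z_1$; $(y_k-x)/t$ if $x\in[z_{k-1},z_k]$, $k\in\{2,\dots,n-1\}$; $(y_n-x)/t$ if $x\ge z_{n-1}$. (For $n=2$, $D=\Delta=1$: $\bar s_t(x)=(\mathrm{sgn}(x)-x)/t$.) *)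

From HB Require Import structures.
From mathcomp Require Import all_boot all_order all_algebra.
From mathcomp Require Import all_classical all_reals all_analysis.
Set Implicit Arguments. Unset Strict Implicit. Unset Printing Implicit Defensive.
Import Order.TTheory GRing.Theory Num.Theory.
Import numFieldNormedType.Exports.
Local Open Scope ring_scope.

Section GaussMix.
Variable R : realType.

Definition Delta (n : nat) (D : R) : R := D / (n.-1)%:R.

Definition ypt (n : nat) (D : R) (k : nat) : R :=
  2 * ((k%:R - 1) * Delta n D) - D.

Definition zpt (n : nat) (D : R) (k : nat) : R := ypt n D k + Delta n D.

Definition gauss (x sigma : R) : R :=
  (Num.sqrt (2 * pi) * sigma)^-1 * expR (- (x ^+ 2) / (2 * sigma ^+ 2)).

Definition pmix (n : nat) (D t x : R) : R :=
  n%:R^-1 * \sum_(1 <= k < n.+1) gauss (x - ypt n D k) (Num.sqrt t).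

(* Index of the piece of the piecewise-linear ESF containing x:
   1 if x <= z_1; k if z_{k-1} < x <= z_k (2 <= k <= n-1); n if x > z_{n-1}.
   (On the measure-zero breakpoints the paper's overlapping cases are
   resolved by taking the left piece.) *)
Definition piece (n : nat) (D x : R) : nat :=
  (1 + \sum_(1 <= j < n) nat_of_bool (zpt n D j < x)%R)%N.

Definition sbar (n : nat) (D t x : R) : R :=
  (ypt n D (piece n D x) - x) / t.

End GaussMix.

From HB Require Import structures.
From mathcomp Require Import all_boot all_order all_algebra.
From mathcomp Require Import all_classical all_reals all_analysis.
From mathcomp Require Import ring lra zify.
Set Implicit Arguments.
Unset Strict Implicit.
Unset Printing Implicit Defensive.
Import Order.TTheory GRing.Theory Num.Theory.
Import numFieldNormedType.Exports.
Local Open Scope ring_scope.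

(* On the piece containing x the piecewise-linear score is the score of the
   nearest Gaussian alone, so its difference with the score of the mixture is
   a weighted average of (y_k - y_j) / t over the other centres y_j, all at
   distance at least Delta from x.  Hence the squared error times the density
   is at most D^2 / t^2 times the mass of the other Gaussians at x, and a
   Gaussian of variance t evaluated at distance >= Delta is at most
   exp(- Delta^2 / (4 t)) times a Gaussian of variance 2t.  Integrating gives
   O(exp(- Delta^2 / (4 t)) / t) = O(exp(- Delta^2 / (9 t))). *)

Lemma is_derive_sum_seq {R : numFieldType} {V W : normedModType R} {I : Type}
    (r : seq I) (f : I -> V -> W) (df : I -> W) (x v : V) :
  (forall i, is_derive x v (f i) (df i)) ->
  is_derive x v (fun u => \sum_(i <- r) f i u) (\sum_(i <- r) df i).
Proof.
move=> fdf; elim: r => [|i r IH].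
  rewrite big_nil.
  have -> : (fun u => \sum_(i <- [::]) f i u) = cst 0.
    by apply/funext => u; rewrite big_nil.
  exact: is_derive_cst.
rewrite big_cons.
have -> : (fun u => \sum_(j <- i :: r) f j u) = f i + (fun u => \sum_(j <- r) f j u).
  by apply/funext => u; rewrite big_cons.
exact: is_deriveD.
Qed.

Section Gaussian.
Variable R : realType.

Lemma gauss_gt0 (u s : R) : 0 < s -> 0 < gauss u s.
Proof.
move=> s0; rewrite /gauss mulr_gt0 ?expR_gt0 // invr_gt0 mulr_gt0 //.
by rewrite sqrtr_gt0 mulr_gt0 ?pi_gt0.
Qed.

Lemma is_derive_gauss_shift (y s x : R) : s != 0 ->
  is_derive x 1 (fun u => gauss (u - y) s) (gauss (x - y) s * ((y - x) / s ^+ 2)).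
Proof.
move=> s0; rewrite /gauss; apply: is_derive_eq.
rewrite scaler0 add0r !subr0 !scaler1 [LHS]/GRing.scale /= -mulrA.
by congr (_ * _); rewrite [_ *: _]/GRing.scale /=; field.
Qed.

(* Half of the exponent pays for the separation [d], the other half is the
   density of N(y, 2t); the normalising constants differ by sqrt 2 <= 2. *)
Lemma gauss_le_normal_pdf (t d x y : R) : 0 < t -> 0 <= d -> d <= `|x - y| ->
  gauss (x - y) (Num.sqrt t) <=
  2 * expR (- d ^+ 2 / (4 * t)) * normal_pdf y (Num.sqrt (2 * t)) x.
Proof.
move=> t0 d0 dxy.
have s0 : Num.sqrt (2 * t) != 0 by rewrite gt_eqF // sqrtr_gt0 mulr_gt0.
rewrite normal_pdfE //= /normal_peak /normal_fun /gauss.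
have t0' := ltW t0.
rewrite !sqr_sqrtr ?mulr_ge0 //.
set A := Num.sqrt (2 * pi) * Num.sqrt t.
set B := Num.sqrt (2 * t * pi *+ 2).
set u := x - y.
have A0 : 0 < A by rewrite mulr_gt0 // sqrtr_gt0 ?mulr_gt0 ?pi_gt0.
have B0 : 0 < B by rewrite sqrtr_gt0 pmulrn_lgt0 // !mulr_gt0 ?pi_gt0.
have B2 : B ^+ 2 = 2 * A ^+ 2.
  rewrite /B /A exprMn !sqr_sqrtr ?mulrn_wge0 ?mulr_ge0 ?pi_ge0 //.
  by rewrite -mulr_natr; ring.
have invA : A^-1 <= 2 * B^-1.
  rewrite -[2 * _]invf_div lef_pV2 ?posrE ?divr_gt0 //; nra.
have u2 : d ^+ 2 <= u ^+ 2 by rewrite -(real_normK (num_real u)); nra.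
have ex : expR (- u ^+ 2 / (2 * t))
    <= expR (- d ^+ 2 / (4 * t)) * expR (- u ^+ 2 / (2 * t *+ 2)).
  rewrite -expRD ler_expR.
  have -> : - u ^+ 2 / (2 * t) = - u ^+ 2 / (4 * t) + - u ^+ 2 / (4 * t).
    by field; rewrite gt_eqF.
  have -> : 2 * t *+ 2 = 4 * t by rewrite -mulr_natr; ring.
  by rewrite lerD2r !mulNr lerN2 ler_wpM2r // invr_ge0 mulr_ge0.
apply: le_trans (ler_pM _ _ invA ex) _; rewrite ?invr_ge0 ?expR_ge0 ?(ltW A0) //.
by rewrite le_eqVlt; apply/orP; left; apply/eqP; ring.
Qed.

Lemma mul_expRN_le1 (q : R) : q * expR (- q) <= 1.
Proof.
rewrite -(expRxMexpNx_1 q) ler_wpM2r ?expR_ge0 //.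
by apply: le_trans (expR_ge1Dx q); lra.
Qed.

(* With q := 5 d^2 / (36 t) the quotient is 36 / (5 d^2) * exp(- d^2 / (9 t)) * q e^-q,
   because 1/4 - 1/9 = 5/36. *)
Lemma expRN_quarter_div_le (d t : R) : 0 < t -> d != 0 ->
  expR (- (d ^+ 2) / (4 * t)) / t <=
  36 / (5 * d ^+ 2) * expR (- (d ^+ 2) / (9 * t)).
Proof.
move=> t0 d0; set q := 5 * d ^+ 2 / (36 * t).

rewrite (_ : _ / t = 36 / (5 * d ^+ 2) * expR (- (d ^+ 2) / (9 * t)) * (q * expR (- q))).
  rewrite -[leRHS]mulr1 ler_wpM2l ?mul_expRN_le1 //.
  by rewrite mulr_ge0 ?expR_ge0 // divr_ge0 // mulr_ge0 ?sqr_ge0.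
have -> : expR (- (d ^+ 2) / (4 * t)) = expR (- (d ^+ 2) / (9 * t)) * expR (- q).
  by rewrite -expRD /q; congr expR; field; rewrite gt_eqF.
by rewrite /q; field; rewrite gt_eqF.
Qed.

(* No measurability is needed: for nonnegative integrands the integral is the
   supremum of the integrals of the simple functions below them. *)
Lemma ge0_le_integralT (f g : R -> R) :
  (forall x, 0 <= f x) -> (forall x, f x <= g x) ->
  (\int[@lebesgue_measure R]_(x in [set: R]) (f x)%:E <=
   \int[@lebesgue_measure R]_(x in [set: R]) (g x)%:E)%E.
Proof.
move=> f0 fg.
have g0 x : 0 <= g x by exact: le_trans (f0 x) (fg x).
rewrite !ge0_integralTE => [|x|x]; rewrite ?lee_fin //.
apply: ereal_sup_le => _ /= [h hf <-].
by exists h => // x; rewrite (le_trans (hf x)) // lee_fin.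
Qed.

Lemma integral_sum_normal_pdf (n : nat) (K s : R) (m : nat -> R) : 0 <= K ->
  (\int[@lebesgue_measure R]_(x in [set: R])
     (K * \sum_(1 <= j < n.+1) normal_pdf (m j) s x)%:E = (K * n%:R)%:E)%E.
Proof.
move=> K0.
under eq_integral do rewrite EFinM -sumEFin.
rewrite ge0_integralZl_EFin //; first last.
- apply: emeasurable_sum => j; apply/measurable_realfun.measurable_EFinP.
  exact: measurable_normal_pdf.
- by move=> x _; apply: sume_ge0 => j _; rewrite lee_fin normal_pdf_ge0.
rewrite ge0_integral_sum //; first last.
- by move=> j x _; rewrite lee_fin normal_pdf_ge0.
- by move=> j; apply/measurable_realfun.measurable_EFinP; exact: measurable_normal_pdf.
under eq_bigr do rewrite integral_normal_pdf.
by rewrite sumEFin EFinM sumr_const_nat subn1.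
Qed.

End Gaussian.

Section Grid.
Variables (R : realType) (n : nat) (D : R).
Hypotheses (n2 : (2 <= n)%N) (D0 : 0 < D).

Lemma Delta_gt0 : 0 < Delta n D.
Proof. by rewrite /Delta divr_gt0 // ltr0n; case: n n2 => [|[|]]. Qed.

Lemma ypt_le i j : (i <= j)%N -> ypt n D i <= ypt n D j.
Proof.
by move=> ij; rewrite /ypt lerD2r ler_pM2l // ler_pM2r ?Delta_gt0 // lerD2r ler_nat.
Qed.

Lemma zpt_le i j : (i <= j)%N -> zpt n D i <= zpt n D j.
Proof. by move=> ij; rewrite /zpt lerD2r ypt_le. Qed.

Lemma yptS i : ypt n D i.+1 = zpt n D i + Delta n D.
Proof. by rewrite /zpt /ypt -addn1 natrD; ring. Qed.

Lemma ypt_bound j : (1 <= j <= n)%N -> - D <= ypt n D j <= D.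
Proof.
case/andP=> j1 jn.
have nDelta : (n.-1)%:R * Delta n D = D by rewrite /Delta mulrC divfK // pnatr_eq0; lia.
have j1R : (j%:R - 1 : R) = (j.-1)%:R by rewrite -subn1 natrB.
have : 0 <= (j%:R - 1 : R) * Delta n D <= D.
  rewrite -{3}nDelta j1R mulr_ge0 ?(ltW Delta_gt0) //= ler_pM2r ?Delta_gt0 // ler_nat.
  lia.
by rewrite /ypt => /andP [? ?]; apply/andP; split; lra.
Qed.

Lemma piece_gt x i : (1 <= i < n)%N -> zpt n D i < x -> (i < piece n D x)%N.
Proof.
case/andP=> i1 iltn zx; rewrite /piece add1n ltnS (big_cat_nat (n:=i.+1)) //=.
apply: leq_trans (leq_addr _ _).
apply: (@leq_trans (\sum_(1 <= j < i.+1) 1)%N).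
  by rewrite sum_nat_const_nat muln1 subn1.
rewrite big_nat_cond [X in (_ <= X)%N]big_nat_cond.
apply: leq_sum => j /andP [/andP [j1 ji] _].
by rewrite (le_lt_trans (@zpt_le j i _)) // -ltnS.
Qed.

Lemma piece_le x i : (1 <= i < n)%N -> x <= zpt n D i -> (piece n D x <= i)%N.
Proof.
case/andP=> i1 iltn xz; rewrite /piece add1n (big_cat_nat (n:=i)) //=; last exact: ltnW.
rewrite [X in (_ + X)%N]big1_seq ?addn0; last first.
  move=> j /andP [_]; rewrite mem_index_iota => /andP [ij _].
  by rewrite ltNge (le_trans xz (@zpt_le i j ij)).
apply: (@leq_ltn_trans (\sum_(1 <= j < i) 1)%N).
  by apply: leq_sum => j _; apply: leq_b1.
by rewrite sum_nat_const_nat muln1; lia.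
Qed.

Lemma piece_range x : (1 <= piece n D x <= n)%N.
Proof.
have : (\sum_(1 <= j < n) nat_of_bool (zpt n D j < x)%R <= \sum_(1 <= j < n) 1)%N.
  by apply: leq_sum => j _; apply: leq_b1.
by rewrite sum_nat_const_nat muln1 /piece; lia.
Qed.

Lemma Delta_le_dist_ypt x j : (1 <= j <= n)%N -> j != piece n D x ->
  Delta n D <= `|x - ypt n D j|.
Proof.
case/andP=> j1 jn; have /andP [p1 pn] := piece_range x.
rewrite neq_ltn => /orP [jp|pj].
  have zx : zpt n D j < x.
    rewrite ltNge; apply/negP => xz.
    suff : (piece n D x <= j)%N by lia.
    by apply: piece_le => //; lia.
  by rewrite ler_normr; apply/orP; left; move: zx; rewrite /zpt; lra.
case: j j1 jn pj => [//|i] _ jn pi.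
have xz : x <= zpt n D i.
  rewrite leNgt; apply/negP => zx.
  suff : (i < piece n D x)%N by lia.
  by apply: piece_gt => //; lia.
by rewrite ler_normr yptS; apply/orP; right; lra.
Qed.

End Grid.

Definition dpmix {R : realType} (n : nat) (D t x : R) : R :=
  n%:R^-1 * \sum_(1 <= k < n.+1)
    gauss (x - ypt n D k) (Num.sqrt t) * ((ypt n D k - x) / t).

Section Mixture.
Variables (R : realType) (n : nat) (D t : R).
Hypothesis t0 : 0 < t.

Lemma pmix_gt0 (x : R) : (1 <= n)%N -> 0 < pmix n D t x.
Proof.
move=> n1; rewrite /pmix mulr_gt0 ?invr_gt0 ?ltr0n // big_ltn ?ltnS //.
have gt0 k : 0 < gauss (x - ypt n D k) (Num.sqrt t) by rewrite gauss_gt0 ?sqrtr_gt0.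
by rewrite ltr_wpDr ?gt0 // sumr_ge0 // => k _; rewrite ltW ?gt0.
Qed.

Lemma is_derive_pmix (x : R) : is_derive x 1 (pmix n D t) (dpmix n D t x).
Proof.
apply: is_deriveZ; apply: is_derive_sum_seq => k.
have := @is_derive_gauss_shift R (ypt n D k) (Num.sqrt t) x.
by rewrite sqr_sqrtr ?ltW //; apply; rewrite gt_eqF // sqrtr_gt0.
Qed.

Lemma derive1_ln_pmix (x : R) : (1 <= n)%N ->
  derive1 (fun u => ln (pmix n D t u)) x = dpmix n D t x / pmix n D t x.
Proof.
move=> n1; rewrite derive1E -[fun u => _]/(@ln R \o pmix n D t).
have := is_derive1_comp (is_derive1_ln (pmix_gt0 x n1)) (is_derive_pmix x).
by move=> ?; rewrite derive_val mulrC.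
Qed.

End Mixture.

Section ScoreError.
Variables (R : realType) (n : nat) (D t x : R).
Hypotheses (n2 : (2 <= n)%N) (D0 : 0 < D) (t0 : 0 < t).

Local Notation y := (ypt n D).
Local Notation k := (piece n D x).
Local Notation w j := (gauss (x - ypt n D j) (Num.sqrt t)).
Local Notation S := (\sum_(1 <= j < n.+1) w j).

Lemma w_gt0 j : 0 < w j.
Proof. by rewrite gauss_gt0 ?sqrtr_gt0. Qed.

Lemma sum_w_gt0 : 0 < S.
Proof.
rewrite big_ltn ?ltnS; last lia.
by rewrite ltr_wpDr ?w_gt0 // sumr_ge0 // => j _; exact/ltW/w_gt0.
Qed.

Lemma score_error_sq_mul_pmix :
  (sbar n D t x - derive1 (fun u => ln (pmix n D t u)) x) ^+ 2 * pmix n D t x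
  = (\sum_(1 <= j < n.+1) w j * (y k - y j)) ^+ 2 / (t ^+ 2 * S * n%:R).
Proof.
have n1 : (1 <= n)%N by lia.
have nR0 : 0 < n%:R :> R by rewrite ltr0n; lia.
have S0 := sum_w_gt0.
have Q_div : \sum_(1 <= j < n.+1) w j * ((y j - x) / t)
    = (\sum_(1 <= j < n.+1) w j * (y j - x)) / t.
  by rewrite mulr_suml; apply: eq_bigr => j _; rewrite mulrA.
have W_split : \sum_(1 <= j < n.+1) w j * (y k - y j)
    = (y k - x) * S - \sum_(1 <= j < n.+1) w j * (y j - x).
  by rewrite mulr_sumr -sumrB; apply: eq_bigr => j _; ring.
rewrite derive1_ln_pmix // /sbar /dpmix /pmix Q_div W_split.
by field; rewrite !gt_eqF.
Qed.

Lemma norm_sum_le_off_piece :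
  `|\sum_(1 <= j < n.+1) w j * (y k - y j)|
    <= 2 * D * \sum_(1 <= j < n.+1 | j != k) w j.
Proof.
have /andP [yk1 yk2] := ypt_bound n2 D0 (piece_range n2 D0 x).
rewrite mulr_sumr [leRHS]big_mkcond /=; apply: le_trans (ler_norm_sum _ _ _) _.
apply: ler_sum_nat => j /andP [j1 jn]; rewrite ltnS in jn.
have [jk|jk] := eqVneq j k; first by rewrite jk subrr mulr0 normr0.
have /andP [yj1 yj2] : - D <= y j <= D by rewrite ypt_bound ?j1.
rewrite normrM gtr0_norm ?w_gt0 // mulrC ler_wpM2r ?(ltW (w_gt0 j)) //.
by rewrite ler_norml; apply/andP; split; lra.
Qed.

Lemma off_piece_weight_le :
  \sum_(1 <= j < n.+1 | j != k) w j <=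
  2 * expR (- (Delta n D ^+ 2) / (4 * t))
    * \sum_(1 <= j < n.+1) normal_pdf (y j) (Num.sqrt (2 * t)) x.
Proof.
rewrite [leLHS]big_mkcond mulr_sumr /=; apply: ler_sum_nat => j /andP [j1 jn].
case: ifP => [jk|_]; last by rewrite !mulr_ge0 ?expR_ge0 ?normal_pdf_ge0.
rewrite ltnS in jn; apply: gauss_le_normal_pdf => //.
  exact/ltW/Delta_gt0.
by rewrite Delta_le_dist_ypt ?j1.
Qed.

Lemma score_error_le :
  (sbar n D t x - derive1 (fun u => ln (pmix n D t u)) x) ^+ 2 * pmix n D t x <=
  8 * D ^+ 2 * expR (- (Delta n D ^+ 2) / (4 * t)) / (n%:R * t ^+ 2) *
  \sum_(1 <= j < n.+1) normal_pdf (y j) (Num.sqrt (2 * t)) x.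
Proof.
have nR0 : 0 < n%:R :> R by rewrite ltr0n; lia.
rewrite score_error_sq_mul_pmix ler_pdivrMr ?mulr_gt0 ?exprn_gt0 ?sum_w_gt0 //.
have := off_piece_weight_le; have := norm_sum_le_off_piece.
set U := \sum_(1 <= j < n.+1 | j != k) w j; set W := \sum_(1 <= j < n.+1) _.
set E := expR _; set P := \sum_(1 <= j < n.+1) _ => WU UP.
have U0 : 0 <= U by rewrite sumr_ge0 // => j _; rewrite ltW ?w_gt0.
have US : U <= S.
  rewrite [S](bigID (fun j => j != k)) /= lerDl sumr_ge0 // => j _.
  exact/ltW/w_gt0.
have W2 : W ^+ 2 <= 4 * D ^+ 2 * U * S.
  rewrite -(real_normK (num_real W)).
  apply: (@le_trans _ _ ((2 * D * U) ^+ 2)); first by rewrite !expr2 ler_pM.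
  rewrite (_ : _ ^+ 2 = 4 * D ^+ 2 * U * U); last by ring.
  by apply: ler_wpM2l US; rewrite mulr_ge0 // mulr_ge0 // sqr_ge0.
apply: le_trans W2 _.
rewrite [leRHS](_ : _ = 4 * D ^+ 2 * S * (2 * E * P)); last first.
  by field; rewrite !gt_eqF.
rewrite -[leLHS]mulrA [U * S]mulrC [leLHS]mulrA; apply: ler_wpM2l UP.
by rewrite mulr_ge0 ?(ltW sum_w_gt0) // mulr_ge0 // sqr_ge0.
Qed.

End ScoreError.

Theorem mainTheorem3 (R : realType) (n : nat) (D : R) :
  (2 <= n)%N -> 0 < D ->
  exists t1 C : R, 0 < t1 /\ 0 < C /\
    forall t : R, 0 < t -> t < t1 ->
      (t%:E * \int[@lebesgue_measure R]_(x in [set: R])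
          (((sbar n D t x - derive1 (fun u => ln (pmix n D t u)) x) ^+ 2)
             * pmix n D t x)%:E
       <= (C * expR (- (Delta n D ^+ 2) / (9 * t)))%:E)%E.
Proof.
move=> n2 D0; have Delta0 := Delta_gt0 n2 D0.
have nR0 : 0 < n%:R :> R by rewrite ltr0n; lia.
exists 1, (8 * D ^+ 2 * (36 / (5 * Delta n D ^+ 2))).
split=> //; split; first by rewrite !mulr_gt0 ?exprn_gt0 // invr_gt0 mulr_gt0 ?exprn_gt0.
move=> t t0 _.
have error_ge0 x :
    0 <= (sbar n D t x - derive1 (fun u => ln (pmix n D t u)) x) ^+ 2 * pmix n D t x.
  by rewrite mulr_ge0 ?sqr_ge0 // ltW // pmix_gt0 //; lia.
have t0E : (0 <= t%:E)%E by rewrite lee_fin ltW.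
apply: le_trans (lee_wpmul2l t0E (ge0_le_integralT error_ge0 (fun x => score_error_le x n2 D0 t0))) _.
rewrite integral_sum_normal_pdf -?EFinM ?lee_fin; last first.
  apply: divr_ge0; first by rewrite mulr_ge0 ?expR_ge0 // mulr_ge0 ?sqr_ge0.
  by rewrite mulr_ge0 ?sqr_ge0 // ltW.
rewrite (_ : t * _ = 8 * D ^+ 2 * (expR (- (Delta n D ^+ 2) / (4 * t)) / t)); last first.
  by field; rewrite !gt_eqF.
by rewrite -[leRHS]mulrA ler_wpM2l ?expRN_quarter_div_le ?gt_eqF // mulr_ge0 ?sqr_ge0.
Qed.
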